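(* Fix $k=1$ and $\epsilon$ with $0\le\epsilon\le1/2$, and assume $m^{\epsilon}\le\sqrt n$. Any deterministic coverage oracle that stores a datastructure of at most $b=nm^{1-2\epsilon}$ bits does not attain an approximation ratio of $O(m^{\epsilon-\delta})$ for any constant $\delta>0$.
   Context: A set system with $n$ items and $m$ sets is a pair $(\mathcal X,\mathcal I)$ with $\mathcal X=\{1,\dots,n\}$ and $\mathcal I$ an indexed family of $m$ subsets of $\mathcal X$. For $k\ge1$ and a query $Q\subseteq\mathcal X$, $OPT(k,\mathcal X,\mathcal I,Q)=\max\{|(\bigcup_{S\in\mathcal J}S)\cap Q| : \mathcal J\subseteq\mathcal I,|\mathcal J|\le k\}$. A deterministic coverage oracle consists of a deterministic static stage mapping $(n,m,k,(\mathcal X,\mathcal I))$ to a bit string $\mathcal D$ (the datastructure), and a deterministic dynamic stage mapping $(\mathcal D,Q)$, for $Q\subseteq\mathcal X$, to (indices of) $\mathcal J\subseteq\mathcal I$ with $|\mathcal J|\le k$, without access to $(\mathcal X,\mathcal I)$; $\mathcal A(k,\mathcal X,\mathcal I,Q)=|(\bigcup_{S\in\mathcal J}S)\cap Q|$. The approximation ratio is $\max OPT/\mathcal A$ over all set systems with $n$ items and $m$ sets and all queries $Q$. No computational restrictions are assumed. *)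

From mathcomp Require Import all_boot.
From Stdlib Require Import Reals.

Set Implicit Arguments.
Unset Strict Implicit.
Unset Printing Implicit Defensive.

(* A set system with n items and m sets: items are 'I_n (= {1..n} shifted to
   {0..n-1}), and the indexed family of m subsets is a function 'I_m -> {set 'I_n}. *)
Definition setsys (n m : nat) := 'I_m -> {set 'I_n}.

Definition coverage (n m : nat) (I : setsys n m) (J : {set 'I_m}) (Q : {set 'I_n}) : nat :=
  #|(\bigcup_(j in J) I j) :&: Q|.

Definition OPT (n m k : nat) (I : setsys n m) (Q : {set 'I_n}) : nat :=
  \max_(J : {set 'I_m} | #|J| <= k) coverage I J Q.

(* A deterministic coverage oracle for fixed (n, m, k):
   static stage  : set system -> bit string (the datastructure D);
   dynamic stage : (D, Q) -> indices J of at most k sets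
   (the dynamic stage has no access to the set system). *)
Definition valid_dynamic (n m k : nat) (dyn : seq bool -> {set 'I_n} -> {set 'I_m}) : Prop :=
  forall (D : seq bool) (Q : {set 'I_n}), #|dyn D Q| <= k.

Definition uses_at_most_bits (n m : nat) (stat : setsys n m -> seq bool) (b : R) : Prop :=
  forall I : setsys n m, (INR (size (stat I)) <= b)%R.

(* The oracle achieves approximation ratio at most r, i.e.
   max_{I,Q} OPT/A <= r, written without division: OPT <= r * A
   (so A = 0 < OPT counts as an infinite ratio). *)
Definition achieves_ratio (n m k : nat) (stat : setsys n m -> seq bool)
  (dyn : seq bool -> {set 'I_n} -> {set 'I_m}) (r : R) : Prop :=
  forall (I : setsys n m) (Q : {set 'I_n}),
    (INR (OPT k I Q) <= r * INR (coverage I (dyn (stat I) Q) Q))%R.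

(* Hard instances live in the plane F_p x F_p, so n = p^2.  Set 0 is the line x = 0; set k is
   the graph of a polynomial of degree <= d whose non-constant coefficients e k are fixed and
   pairwise distinct, and whose constant term b k is the hidden datum.  Query the graph of the
   polynomial with coefficients e k and constant term c: if c = b k, set k covers all p points,
   while any other set meets it in at most d points (distinct polynomials) or in one point (the
   line); if c <> b k, set k misses it (parallel graphs) while the line meets it.  An oracle of
   ratio below p / d therefore answers exactly {k} iff c = b k, so its datastructure determines
   b, which needs p^m distinct bit strings.  Taking m ~ p^(1/eps) and d ~ 1/eps, the budget
   n m^(1-2 eps) <= 2m is too small, and C m^(eps - delta) < p / d once p is large.  For
   eps = 0 the claimed ratio C m^(-delta) is eventually below 1, which no oracle attains. *)

From Stdlib Require Import Reals Lra Lia ZArith.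
From mathcomp Require Import all_boot all_algebra zify.
Import GRing.Theory.
Set Implicit Arguments.
Unset Strict Implicit.
Unset Printing Implicit Defensive.

Section PlaneGeometry.
Open Scope ring_scope.
Variable F : finFieldType.

Definition plane_size : nat := #|{: F * F}|.

Definition point (i : 'I_plane_size) : F * F := enum_val i.

Definition graph (g : {poly F}) : {set 'I_plane_size} :=
  [set i | (point i).2 == g.[(point i).1]].

Definition axis : {set 'I_plane_size} := [set i | (point i).1 == 0].

Lemma card_graph_sub (g : {poly F}) (A : {set 'I_plane_size}) (X : {set F}) :
  A \subset graph g -> {in A, forall i, (point i).1 \in X} -> (#|A| <= #|X|)%N.
Proof.
move=> sAg AX.
have inj_abscissa : {in A &, injective (fun i => (point i).1)}.
  move=> i j /(subsetP sAg) + /(subsetP sAg); rewrite !inE /point => /eqP gi /eqP gj eij.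
  apply: enum_val_inj; move: gi gj eij.
  by case: (enum_val i); case: (enum_val j) => /= ? ? ? ? -> -> ->.
rewrite -(card_in_imset inj_abscissa); apply: subset_leq_card.
by apply/subsetP => _ /imsetP [i iA ->]; apply: AX.
Qed.

Lemma card_graph (g : {poly F}) : (#|F| <= #|graph g|)%N.
Proof.
have inj : injective (fun x : F => enum_rank (x, g.[x]) : 'I_plane_size).
  by move=> x y /enum_rank_inj [].
rewrite -cardsT -(card_imset [set: F] inj); apply: subset_leq_card.
by apply/subsetP => _ /imsetP [x _ ->]; rewrite inE /point enum_rankK.
Qed.

Lemma card_graphI_lt (g h : {poly F}) :
  g != h -> (#|graph g :&: graph h| < size (g - h)%R)%N.
Proof.
move=> neq_gh.
apply: (@leq_ltn_trans #|[set x | root (g - h) x]|).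
  apply: card_graph_sub (subsetIl _ _) _ => i; rewrite !inE => /andP [/eqP gi /eqP hi].
  by rewrite /root hornerD hornerN -gi -hi subrr.
rewrite cardE; apply: max_poly_roots; first by rewrite subr_eq0.
  by apply/allP => x; rewrite mem_enum inE.
exact: enum_uniq.
Qed.

Lemma card_axisI_graph (g : {poly F}) : #|axis :&: graph g| = 1%N.
Proof.
apply/eqP; rewrite eqn_leq; apply/andP; split.
  rewrite -(cards1 (0 : F)); apply: card_graph_sub (subsetIr _ _) _ => i.
  by rewrite !inE => /andP [/eqP -> _].
apply/card_gt0P; exists (enum_rank ((0 : F), g.[0])).
by rewrite !inE /point enum_rankK /= !eqxx.
Qed.

End PlaneGeometry.

Section PolyWithCoefs.
Open Scope ring_scope.
Variables (F : finFieldType) (d : nat).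

Definition poly_with (t : {ffun 'I_d -> F}) (c : F) : {poly F} := Poly (c :: fgraph t).

Lemma size_poly_with t c : (size (poly_with t c) <= d.+1)%N.
Proof. by apply: leq_trans (size_Poly _) _; rewrite /= size_tuple card_ord. Qed.

Lemma coef_poly_with t c (k : 'I_d) : (poly_with t c)`_k.+1 = t k.
Proof. by rewrite coef_Poly /= nth_fgraph_ord. Qed.

Lemma poly_withB t c c' : poly_with t c - poly_with t c' = (c - c')%:P.
Proof. by apply/polyP => -[|i]; rewrite coefB !coef_Poly coefC //= subrr. Qed.

Lemma card_graphI_poly_with t t' c c' :
  t != t' -> (#|graph (poly_with t c) :&: graph (poly_with t' c')| <= d)%N.
Proof.
move=> neq_tt'.
have neq_poly : poly_with t c != poly_with t' c'.
  apply: contra neq_tt' => /eqP eq_poly; apply/eqP/ffunP => k.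
  by rewrite -(coef_poly_with t c) -(coef_poly_with t' c') eq_poly.
rewrite -ltnS; apply: leq_trans (card_graphI_lt neq_poly) _.
by apply: leq_trans (size_polyD _ _) _; rewrite size_polyN geq_max !size_poly_with.
Qed.

Lemma graphI_poly_with t c c' :
  c != c' -> graph (poly_with t c) :&: graph (poly_with t c') = set0.
Proof.
move=> neq_cc'; apply/eqP; rewrite -cards_eq0 -leqn0 -ltnS.
have <- : size (poly_with t c - poly_with t c') = 1%N.
  by rewrite poly_withB size_polyC subr_eq0 neq_cc'.
by apply: card_graphI_lt; rewrite -subr_eq0 poly_withB polyC_eq0 subr_eq0.
Qed.

End PolyWithCoefs.

Lemma coverage_set1 n m (I : setsys n m) j Q : coverage I [set j] Q = #|I j :&: Q|.
Proof. by rewrite /coverage big_set1. Qed.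

Lemma coverage_set0 n m (I : setsys n m) Q : coverage I set0 Q = 0.
Proof. by rewrite /coverage big_set0 set0I cards0. Qed.

Lemma coverage_le_OPT n m k (I : setsys n m) (J : {set 'I_m}) Q :
  #|J| <= k -> coverage I J Q <= OPT k I Q.
Proof. exact: leq_bigmax_cond. Qed.

Lemma OPT1_ge_set1 n m (I : setsys n m) j Q : #|I j :&: Q| <= OPT 1 I Q.
Proof. by rewrite -coverage_set1; apply: coverage_le_OPT; rewrite cards1. Qed.

Lemma cards_le1_cases (T : finType) (J : {set T}) :
  #|J| <= 1 -> J = set0 \/ exists j, J = [set j].
Proof.
rewrite leq_eqVlt ltnS leqn0 => /orP [/cards1P | /eqP/cards0_eq]; by [right | left].
Qed.

Definition hard_system (F : finFieldType) d m (e : 'I_m -> {ffun 'I_d -> F})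
    (b : {ffun 'I_m -> F}) : setsys (plane_size F) m.+1 :=
  fun j => if unlift ord0 j is Some k then graph (poly_with (e k) (b k)) else axis F.

Section Decoding.
Variables (F : finFieldType) (d m : nat) (e : 'I_m -> {ffun 'I_d -> F}).
Hypotheses (d_gt0 : 0 < d) (e_inj : injective e).
Variables (stat : setsys (plane_size F) m.+1 -> seq bool)
  (dyn : seq bool -> {set 'I_(plane_size F)} -> {set 'I_m.+1}).
Hypothesis dyn_valid : valid_dynamic 1 dyn.
Hypothesis dyn_nonzero : forall I Q, 0 < OPT 1 I Q -> 0 < coverage I (dyn (stat I) Q) Q.
Hypothesis dyn_large : forall I Q, #|F| <= OPT 1 I Q -> d < coverage I (dyn (stat I) Q) Q.

Let answer (b : {ffun 'I_m -> F}) (k : 'I_m) (c : F) :=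
  dyn (stat (hard_system e b)) (graph (poly_with (e k) c)).

Lemma hard_system_lift (b : {ffun 'I_m -> F}) k :
  hard_system e b (lift ord0 k) = graph (poly_with (e k) (b k)).
Proof. by rewrite /hard_system liftK. Qed.

Lemma hard_system_ord0 (b : {ffun 'I_m -> F}) : hard_system e b ord0 = axis F.
Proof. by rewrite /hard_system unlift_none. Qed.

Lemma answer_wrong_const (b : {ffun 'I_m -> F}) k c :
  c != b k -> answer b k c != [set lift ord0 k].
Proof.
move=> neq_c; apply/eqP => answer_k.
pose I := hard_system e b; pose Q := graph (poly_with (e k) c).
have OPT_gt0 : 0 < OPT 1 I Q.
  by apply: leq_trans (OPT1_ge_set1 I ord0 Q); rewrite /I hard_system_ord0 card_axisI_graph.
have := dyn_nonzero OPT_gt0; rewrite (answer_k : dyn (stat I) Q = _).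
by rewrite coverage_set1 /I hard_system_lift setIC graphI_poly_with ?cards0.
Qed.

Lemma answer_right_const (b : {ffun 'I_m -> F}) k : answer b k (b k) = [set lift ord0 k].
Proof.
pose I := hard_system e b; pose Q := graph (poly_with (e k) (b k)).
have OPT_large : #|F| <= OPT 1 I Q.
  apply: leq_trans (card_graph (poly_with (e k) (b k))) _.
  by have := OPT1_ge_set1 I (lift ord0 k) Q; rewrite /I hard_system_lift setIid.
have := dyn_large OPT_large; rewrite -[answer _ _ _]/(dyn (stat I) Q).
have [-> | [j ->]] := cards_le1_cases (dyn_valid (stat I) Q); first by rewrite coverage_set0.
rewrite coverage_set1; case: (unliftP ord0 j) => [k' -> | ->].
  rewrite /I hard_system_lift; have [-> // | neq_k] := eqVneq k' k.
  rewrite ltnNge card_graphI_poly_with //.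
  by apply: contra neq_k => /eqP /e_inj ->.
by rewrite /I hard_system_ord0 card_axisI_graph ltnNge d_gt0.
Qed.

Lemma answer_eq (b : {ffun 'I_m -> F}) k c :
  (answer b k c == [set lift ord0 k]) = (c == b k).
Proof.
have [-> | neq_c] := eqVneq c (b k); first by rewrite answer_right_const eqxx.
exact/negbTE/answer_wrong_const.
Qed.

Lemma stat_hard_system_inj : injective (fun b => stat (hard_system e b)).
Proof.
move=> b b' /= eq_stat; apply/ffunP => k; apply/eqP.
have := answer_right_const b k; rewrite /answer eq_stat => answer_k.
by rewrite -answer_eq /answer answer_k.
Qed.

End Decoding.

Lemma card_le_bitstrings (A : finType) (f : A -> seq bool) B :
  injective f -> (forall a, size (f a) <= B) -> #|A| <= B.+1 * 2 ^ B.
Proof.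
move=> f_inj f_size.
pose code a : 'I_B.+1 * B.-tuple bool :=
  (inord (size (f a)), [tuple nth false (f a) i | i < B]).
suff code_inj : injective code.
  by have := leq_card _ code_inj; rewrite card_prod card_ord card_tuple card_bool.
move=> a a' eq_code; apply: f_inj.
have eq_size' : size (f a) = size (f a').
  by have := congr1 (val \o fst) eq_code; rewrite /= !inordK ?ltnS.
apply: (eq_from_nth (x0 := false) eq_size') => i lt_i.
have lt_iB : i < B := leq_trans lt_i (f_size a).
by have := congr1 (fun c => tnth c.2 (Ordinal lt_iB)) eq_code; rewrite /= !tnth_mktuple.
Qed.

Lemma exists_inj_to_ffun (F : finType) d m : m <= #|F| ^ d ->
  exists e : 'I_m -> {ffun 'I_d -> F}, injective e.
Proof.
move=> le_m; have {}le_m : m <= #|{: {ffun 'I_d -> F}}| by rewrite card_ffun card_ord.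
exists (fun k => enum_val (widen_ord le_m k)).
by move=> k k' /enum_val_inj /(congr1 val) /= /val_inj.
Qed.

Lemma bitstring_bound_lt q m :
  64 <= q -> 3 <= m -> (2 * m.+1).+1 * 2 ^ (2 * m.+1) < q ^ m.
Proof.
move=> le64q le3m.
apply: (@leq_trans (2 ^ (2 * m.+1).+1 * 2 ^ (2 * m.+1))).
  by rewrite ltn_pmul2r ?expn_gt0 //; apply: ltn_expl.
apply: (@leq_trans (64 ^ m)); last by rewrite leq_exp2r // (leq_trans _ le3m).
by rewrite -expnD -[64]/(2 ^ 6) -expnM leq_exp2l //; lia.
Qed.

Lemma no_threshold_oracle (F : finFieldType) d m
    (stat : setsys (plane_size F) m.+1 -> seq bool) dyn :
  0 < d -> 64 <= #|F| -> 3 <= m -> m <= #|F| ^ d -> valid_dynamic 1 dyn ->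
  (forall I, size (stat I) <= 2 * m.+1) ->
  (forall I Q, 0 < OPT 1 I Q -> 0 < coverage I (dyn (stat I) Q) Q) ->
  ~ (forall I Q, #|F| <= OPT 1 I Q -> d < coverage I (dyn (stat I) Q) Q).
Proof.
move=> d_gt0 le64F le3m le_m dyn_valid stat_size dyn_nonzero dyn_large.
have [e e_inj] := exists_inj_to_ffun le_m.
have := card_le_bitstrings (stat_hard_system_inj d_gt0 e_inj dyn_valid dyn_nonzero dyn_large)
  (fun b => stat_size _).
by rewrite card_ffun card_ord leqNgt bitstring_bound_lt.
Qed.

Open Scope R_scope.

Lemma INR_expn (p k : nat) : INR (p ^ k) = INR p ^ k.
Proof. by elim: k => [|k IH] //; rewrite expnS -multE mult_INR IH. Qed.

Lemma exists_floor_nat x : 0 <= x -> exists m : nat, INR m <= x < INR m + 1.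
Proof.
move=> x_ge0; have [up_gt up_le] := archimed x.
have up_gt0 : Z.lt 0 (up x) by apply: lt_IZR; rewrite /=; lra.
exists (Z.to_nat (up x - 1)).
by rewrite INR_IZR_INZ Z2Nat.id ?minus_IZR /=; [lra | lia].
Qed.

Lemma exists_prime_gt (N : nat) x : exists p : nat, [/\ prime p, (N <= p)%N & x < INR p].
Proof.
have [N' ltN'] := INR_unbounded x.
have [p] := prime_above (maxn N N'); rewrite gtn_max => /andP [ltNp ltN'p] p_prime.
exists p; split => //; first exact: ltnW.
by apply: Rlt_trans ltN' _; apply/lt_INR/ltP.
Qed.

Lemma Rpower_invK x a : 0 < x -> a <> 0 -> Rpower (Rpower x (/ a)) a = x.
Proof. by move=> x_gt0 a_neq0; rewrite Rpower_mult Rinv_l // Rpower_1. Qed.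

Lemma Rpower_le_of_le_root x y a : 0 < a -> 0 < x -> 0 < y ->
  y <= Rpower x (/ a) -> Rpower y a <= x.
Proof.
move=> a_gt0 x_gt0 y_gt0 le_y; rewrite -[x in _ <= x](@Rpower_invK x a) //; last lra.
by apply: Rle_Rpower_l; lra.
Qed.

Lemma lt_Rpower_of_root_lt x y a : 0 < a -> 0 < x ->
  Rpower x (/ a) < y -> x < Rpower y a.
Proof.
move=> a_gt0 x_gt0 lt_y; rewrite -[x in x < _](@Rpower_invK x a) //; last lra.
by apply: Rlt_Rpower_l => //; split; [exact: exp_pos | ].
Qed.

Lemma le_expn_of_le_root (m p d : nat) eps : 0 < eps -> (1 <= p)%N -> / eps <= INR d ->
  INR m <= Rpower (INR p) (/ eps) -> (m <= p ^ d)%N.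
Proof.
move=> eps_gt0 p_ge1 le_d le_m; apply/leP/INR_le.
have p_ge1R : 1 <= INR p by apply: (le_INR 1); apply/leP.
rewrite INR_expn -Rpower_pow; last lra.
by apply: Rle_trans le_m _; apply: Rle_Rpower.
Qed.

(* [(y + 1)^eps <= 2^eps y^eps] and [2^(2 eps) <= 2] since [eps <= 1/2]. *)
Lemma sqr_mul_Rpower_le x y eps :
  0 < eps <= 1 / 2 -> 1 <= y -> 0 <= x < Rpower (y + 1) eps ->
  x * x * Rpower y (1 - 2 * eps) <= 2 * y.
Proof.
move=> [eps_gt0 eps_le] y_ge1 [x_ge0 lt_x].
have le_2y : Rpower (y + 1) eps <= Rpower (2 * y) eps by apply: Rle_Rpower_l; lra.
have lt_xx : x * x < Rpower (2 * y) eps * Rpower (2 * y) eps by nra.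
have split_2y :
    Rpower (2 * y) eps * Rpower (2 * y) eps = Rpower 2 (2 * eps) * Rpower y (2 * eps).
  by rewrite -Rpower_plus Rpower_mult_distr; try lra; f_equal; ring.
have le_2 : Rpower 2 (2 * eps) <= 2.
  by rewrite -[X in _ <= X]Rpower_1; try lra; apply: Rle_Rpower; lra.
have y_split : Rpower y (2 * eps) * Rpower y (1 - 2 * eps) = y.
  rewrite -Rpower_plus; replace (2 * eps + (1 - 2 * eps)) with 1 by ring.
  by rewrite Rpower_1; lra.
have := exp_pos ((1 - 2 * eps) * ln y); have := exp_pos (2 * eps * ln y).
rewrite -/(Rpower y (1 - 2 * eps)) -/(Rpower y (2 * eps)) in y_split split_2y *.
nra.
Qed.

Lemma ratio_mul_lt C d p m eps delta : 0 < C -> 0 <= d -> 0 < p <= m ->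
  Rpower m eps <= p -> C * d < Rpower p delta -> 0 < delta ->
  C * Rpower m (eps - delta) * d < p.
Proof.
move=> C_gt0 d_ge0 [p_gt0 le_pm] le_meps lt_Cd delta_gt0.
have le_delta : Rpower p delta <= Rpower m delta by apply: Rle_Rpower_l; lra.
have mdelta_gt0 : 0 < Rpower m delta := exp_pos _.
rewrite /Rminus Rpower_plus Rpower_Ropp.
have meps_gt0 : 0 < Rpower m eps := exp_pos _.
have inv_gt0 := Rinv_0_lt_compat _ mdelta_gt0.
have inv_mul := Rinv_r _ (Rgt_not_eq _ _ mdelta_gt0).
set md := Rpower m delta in le_delta mdelta_gt0 inv_gt0 inv_mul *.
have Cd_ge0 : 0 <= C * d by nra.
have step1 : C * d * / md * Rpower m eps <= C * d * / md * p.
  by apply: Rmult_le_compat_l => //; nra.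
have step2 : C * d * (p * / md) < md * (p * / md) by apply: Rmult_lt_compat_r; nra.
nra.
Qed.

Lemma achieves_ratio_thresholds n m (stat : setsys n m -> seq bool) dyn r (q d : nat) :
  0 <= r -> r * INR d < INR q -> achieves_ratio 1 stat dyn r ->
  (forall I Q, (0 < OPT 1 I Q)%N -> (0 < coverage I (dyn (stat I) Q) Q)%N) /\
  (forall I Q, (q <= OPT 1 I Q)%N -> (d < coverage I (dyn (stat I) Q) Q)%N).
Proof.
move=> r_ge0 lt_rd ratio; split => I Q.
- rewrite !lt0n; apply: contra => /eqP cover0.
  have := ratio I Q; rewrite cover0 /= Rmult_0_r => OPT_le0.
  by apply/eqP/INR_eq; have := pos_INR (OPT 1 I Q); rewrite /=; lra.
- move=> /leP/le_INR le_q; rewrite ltnNge; apply/negP => /leP/le_INR le_cover.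
  have := Rmult_le_compat_l r _ _ r_ge0 le_cover; have := ratio I Q; lra.
Qed.

Lemma no_ratio_lt1 n m (stat : setsys n.+1 m.+1 -> seq bool) dyn r :
  r < 1 -> valid_dynamic 1 dyn -> ~ achieves_ratio 1 stat dyn r.
Proof.
move=> r_lt1 dyn_valid ratio.
pose I : setsys n.+1 m.+1 := fun=> setT.
have OPT_ge1 : (1 <= OPT 1 I setT)%N.
  by apply: leq_trans (OPT1_ge_set1 I ord0 setT); rewrite setIid cardsT card_ord.
have cover_le := coverage_le_OPT I setT (dyn_valid (stat I) setT).
have := ratio I setT.
case: (posnP (coverage I (dyn (stat I) setT) setT)) => [-> | /leP/le_INR cover_ge1].
  by move/leP/le_INR: OPT_ge1 => /=; lra.
move/leP/le_INR: OPT_ge1; move/leP/le_INR: cover_le; rewrite /= in cover_ge1 *; nra.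
Qed.

Lemma no_oracle_on_Fp p d m r (stat : setsys (plane_size 'F_p) m.+1 -> seq bool) dyn :
  prime p -> (64 <= p)%N -> (0 < d)%N -> (3 <= m)%N -> (m <= p ^ d)%N ->
  0 <= r -> r * INR d < INR p -> valid_dynamic 1 dyn ->
  (forall I, (size (stat I) <= 2 * m.+1)%N) -> ~ achieves_ratio 1 stat dyn r.
Proof.
move=> p_prime le64p d_gt0 le3m le_m r_ge0 lt_rd dyn_valid stat_size ratio.
have card_F : #|'F_p| = p := card_Fp p_prime.
have [dyn_nonzero dyn_large] := achieves_ratio_thresholds r_ge0 lt_rd ratio.
by apply: (@no_threshold_oracle _ d m stat dyn); rewrite ?card_F.
Qed.

(* [m] is the integer part of [p^(1/eps)] and [d > 1/eps], so that [m^eps <= p] and [m <= p^d]. *)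
Lemma exists_hard_parameters eps delta C (N0 : nat) :
  0 < eps <= 1 / 2 -> 0 < delta -> 0 < C ->
  exists p d m : nat, prime p /\ (maxn 64 N0 <= p)%N /\ (0 < d)%N /\ (p <= m <= p ^ d)%N /\
    Rpower (INR m) eps <= INR p /\
    INR p * INR p * Rpower (INR m) (1 - 2 * eps) <= 2 * INR m /\
    C * Rpower (INR m) (eps - delta) * INR d < INR p.
Proof.
move=> [eps_gt0 eps_le] delta_gt0 C_gt0.
have inv_eps_ge2 : 2 <= / eps.
  by rewrite -[2]Rinv_inv; apply: Rinv_le_contravar; lra.
have [d lt_d] := INR_unbounded (/ eps).
have d_gt0 : (0 < d)%N by rewrite lt0n; apply/eqP => d0; rewrite d0 /= in lt_d; lra.
have [p [p_prime le_p lt_p]] := exists_prime_gt (maxn 64 N0) (Rpower (C * INR d) (/ delta)).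
have p_ge64 : 64 <= INR p.
  have /leP/le_INR : (64 <= p)%N by apply: leq_trans le_p; apply: leq_maxl.
  by rewrite [INR 64]/=; lra.
have lt_Cd : C * INR d < Rpower (INR p) delta.
  apply: lt_Rpower_of_root_lt => //; apply: Rmult_lt_0_compat => //; lra.
have [m [le_m lt_m]] := @exists_floor_nat (Rpower (INR p) (/ eps)) (Rlt_le _ _ (exp_pos _)).
have le_pX : INR p <= Rpower (INR p) (/ eps).
  by rewrite -[X in X <= _]Rpower_1; try lra; apply: Rle_Rpower; lra.
have le_pm : (p <= m)%N by rewrite -ltnS; apply/ltP/INR_lt; rewrite S_INR; lra.
have m_ge64 : 64 <= INR m by apply: Rle_trans p_ge64 _; apply/le_INR/leP.
exists p, d, m; do 3 (split; first by []); split; [|split; [|split]].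
- rewrite le_pm; apply: le_expn_of_le_root le_m; try lra.
  by apply: leq_trans le_p; rewrite leq_max.
- by apply: Rpower_le_of_le_root; lra.
- apply: sqr_mul_Rpower_le; [lra | lra | split; first exact: pos_INR].
  by apply: lt_Rpower_of_root_lt; lra.
- apply: ratio_mul_lt => //; first exact: pos_INR.
  + by split; [lra | apply/le_INR/leP].
  + by apply: Rpower_le_of_le_root; lra.
Qed.

Lemma lower_bound_eps_pos eps delta C (N0 : nat) :
  0 < eps <= 1 / 2 -> 0 < delta -> 0 < C ->
  exists n m : nat,
    (N0 <= n)%N /\ (N0 <= m)%N /\ Rpower (INR m) eps <= sqrt (INR n) /\
    forall (stat : setsys n m -> seq bool) (dyn : seq bool -> {set 'I_n} -> {set 'I_m}),
      valid_dynamic 1 dyn ->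
      uses_at_most_bits stat (INR n * Rpower (INR m) (1 - 2 * eps)) ->
      ~ achieves_ratio 1 stat dyn (C * Rpower (INR m) (eps - delta)).
Proof.
move=> eps_bounds delta_gt0 C_gt0.
have [p [d [m [p_prime [le_p [d_gt0 [/andP [le_pm le_m] [meps_le [bits_le ratio_lt]]]]]]]]] :=
  exists_hard_parameters N0 eps_bounds delta_gt0 C_gt0.
move: le_p; rewrite geq_max => /andP [le64p le_N0p].
have n_eq : INR (plane_size 'F_p) = INR p * INR p.
  by rewrite /plane_size card_prod card_Fp // -mult_INR.
exists (plane_size 'F_p), m; split; last split; last split.
- by rewrite /plane_size card_prod card_Fp // (leq_trans le_N0p) ?leq_pmulr ?prime_gt0.
- exact: leq_trans le_N0p le_pm.
- by rewrite n_eq sqrt_square //; exact: pos_INR.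
case: m le_pm le_m meps_le bits_le ratio_lt => [|m] le_pm le_m meps_le bits_le ratio_lt;
  first by move: (leq_trans le64p le_pm).
move=> stat dyn dyn_valid stat_bits.
apply: (no_oracle_on_Fp p_prime le64p d_gt0 _ (ltnW le_m)) => //.
- by rewrite -ltnS (leq_trans _ le_pm) // (leq_trans _ le64p).
- apply: Rmult_le_pos; [lra | exact: Rlt_le (exp_pos _)].
- move=> I; apply/leP/INR_le; rewrite mult_INR /=.
  by apply: Rle_trans (stat_bits I) _; rewrite n_eq.
Qed.

Lemma lower_bound_eps0 delta C (N0 : nat) : 0 < delta -> 0 < C ->
  exists n m : nat,
    (N0 <= n)%N /\ (N0 <= m)%N /\ Rpower (INR m) 0 <= sqrt (INR n) /\
    forall (stat : setsys n m -> seq bool) (dyn : seq bool -> {set 'I_n} -> {set 'I_m}),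
      valid_dynamic 1 dyn -> ~ achieves_ratio 1 stat dyn (C * Rpower (INR m) (0 - delta)).
Proof.
move=> delta_gt0 C_gt0.
have [M lt_M] := INR_unbounded (Rpower C (/ delta)).
exists N0.+1, (maxn N0 M).+1; split; first by []; split; first exact/leqW/leq_maxl.
have m_gt0 : 0 < INR (maxn N0 M).+1 by apply: lt_0_INR; apply/ltP.
split.
  rewrite Rpower_O // -sqrt_1; apply: sqrt_le_1_alt.
  by rewrite S_INR; have := pos_INR N0; lra.
move=> stat dyn dyn_valid; apply: no_ratio_lt1 dyn_valid.
have lt_C : C < Rpower (INR (maxn N0 M).+1) delta.
  apply: lt_Rpower_of_root_lt => //; apply: Rlt_le_trans lt_M _.
  by apply/le_INR/leP; rewrite (leq_trans (leq_maxr N0 M)).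
rewrite Rminus_0_l Rpower_Ropp.
have := Rinv_r _ (Rgt_not_eq _ _ (exp_pos (delta * ln (INR (maxn N0 M).+1)))).
have := Rinv_0_lt_compat _ (exp_pos (delta * ln (INR (maxn N0 M).+1))).
rewrite -/(Rpower _ delta) in lt_C *; nra.
Qed.

Close Scope R_scope.
(* all_algebra rebinds the delimiter %R to ring_scope; the statement uses it for Reals. *)
Delimit Scope R_scope with R.

Theorem mainTheorem7 :
  forall (eps delta C : R) (N0 : nat),
    (0 <= eps <= 1 / 2)%R -> (0 < delta)%R -> (0 < C)%R ->
    exists n m : nat,
      (N0 <= n)%N /\ (N0 <= m)%N /\
      (Rpower (INR m) eps <= sqrt (INR n))%R /\
      forall (stat : setsys n m -> seq bool)
             (dyn : seq bool -> {set 'I_n} -> {set 'I_m}),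
        valid_dynamic 1 dyn ->
        uses_at_most_bits stat (INR n * Rpower (INR m) (1 - 2 * eps))%R ->
        ~ achieves_ratio 1 stat dyn (C * Rpower (INR m) (eps - delta))%R.
Proof.
move=> eps delta C N0 [eps_ge0 eps_le] delta_gt0 C_gt0.
have [eps_gt0 | <-] := Rle_lt_or_eq_dec _ _ eps_ge0.
  exact: lower_bound_eps_pos.
have [n [m [le_n [le_m [root_le no_oracle]]]]] := lower_bound_eps0 N0 delta_gt0 C_gt0.
exists n, m; do 3 split => //.
by move=> stat dyn dyn_valid _; apply: no_oracle.
Qed.
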